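(* Let $f:M\to M$ be a continuous map of a compact metric space and $\{\phi_n\}$ a sequence of continuous functions such that for some $L>0$, $|\phi_n(x)|/n\le L$ for $\nu$-a.e. $x$, all $n$, and all $\nu\in\mathcal M_f$. If $\{\phi_n\}$ is subadditive, then $\lim_{n\to\infty}P(\phi_n/n)$ exists and equals $\inf_{n>0}P(\phi_n/n)$. If $\{\phi_n\}$ is superadditive, then $\lim_{n\to\infty}P(\phi_n/n)$ exists and equals $\sup_{n>0}P(\phi_n/n)$.
   Context: $\mathcal M_f$ is the set of $f$-invariant Borel probability measures; $P(\phi)=\sup_{\nu\in\mathcal M_f}\{h(\nu)+\int\phi\,d\nu\}$ is the topological pressure of continuous $\phi$, $h$ the metric entropy. Subadditive (resp. superadditive): $\phi_{n+m}\le\phi_n+\phi_m\circ f^n$ (resp. $\ge$) for all $n,m$. *)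

From HB Require Import structures.
From mathcomp Require Import all_boot all_order all_algebra.
From mathcomp Require Import all_classical all_reals all_analysis.
Set Implicit Arguments. Unset Strict Implicit. Unset Printing Implicit Defensive.
Import Order.TTheory GRing.Theory Num.Theory.
Import numFieldNormedType.Exports.
Local Open Scope classical_set_scope.
Local Open Scope ring_scope.

Section Thermo.
Variables (R : realType) (M : pseudoPMetricType R).

Definition Borel := g_sigma_algebraType (@open M).

Definition is_invariant (f : M -> M) (nu : probability Borel R) : Prop :=
  forall A : set Borel, measurable A -> nu (f @^-1` A) = nu A.

Definition Mf (f : M -> M) : set (probability Borel R) :=
  [set nu | is_invariant f nu].

Definition eta (x : R) : R := if x == 0 then 0 else - (x * ln x).

Definition is_mpart (k : nat) (A : 'I_k -> set Borel) : Prop :=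
  [/\ forall i, measurable (A i),
      forall i j, i != j -> A i `&` A j = set0 &
      \bigcup_(i in [set: 'I_k]) A i = [set: Borel] ].

(* H_nu( xi v f^{-1} xi v ... v f^{-(n-1)} xi ) *)
Definition Hjoin (f : M -> M) (nu : probability Borel R) (k : nat)
  (A : 'I_k -> set Borel) (n : nat) : R :=
  \sum_(w : {ffun 'I_n -> 'I_k})
     eta (fine (nu [set x : Borel | forall i : 'I_n, A (w i) (iter i f x)])).

Definition hpart (f : M -> M) (nu : probability Borel R) (k : nat)
  (A : 'I_k -> set Borel) : R :=
  lim ((fun n : nat => Hjoin f nu A n / n%:R) @ \oo).

Definition hmu (f : M -> M) (nu : probability Borel R) : \bar R :=
  ereal_sup [set r | exists k (A : 'I_k -> set Borel),
                       is_mpart A /\ r = (hpart f nu A)%:E].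

(* topological pressure via the variational formula *)
Definition pressure (f : M -> M) (g : M -> R) : \bar R :=
  ereal_sup [set (hmu f nu + \int[nu]_x (g x)%:E)%E | nu in Mf f].

Definition subadditive_seq (f : M -> M) (phi : nat -> M -> R) : Prop :=
  forall n m, (0 < n)%N -> (0 < m)%N ->
    forall x, phi (n + m)%N x <= phi n x + phi m (iter n f x).

Definition superadditive_seq (f : M -> M) (phi : nat -> M -> R) : Prop :=
  forall n m, (0 < n)%N -> (0 < m)%N ->
    forall x, phi (n + m)%N x >= phi n x + phi m (iter n f x).

End Thermo.

(** For every invariant measure [nu], the integrals [a n = \int phi n dnu] form
    a subadditive sequence with [|a n| <= n L], and a Fekete-type division
    argument gives [a m / m <= a n / n + 2 L n / m] uniformly in [nu].  Adding
    [h(nu)] and taking the supremum over [nu] yields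
    [P(phi m / m) <= P(phi n / n) + 2 L n / m], which forces the pressures to
    converge to their infimum.  The superadditive case is symmetric. *)

From HB Require Import structures.
From mathcomp Require Import all_boot all_order all_algebra.
From mathcomp Require Import all_classical all_reals all_analysis.
From mathcomp Require Import measurable_realfun lra.
Import Order.TTheory GRing.Theory Num.Theory.
Import numFieldNormedType.Exports.
Local Open Scope classical_set_scope.
Local Open Scope ring_scope.
Set Implicit Arguments. Unset Strict Implicit.

Lemma cvg_ereal_inf_of_le_add_div (R : realType) (P : nat -> \bar R) (K : R) :
  0 <= K ->
  (forall n m, (0 < n)%N -> (0 < m)%N -> (P m <= P n + (K * n%:R / m%:R)%:E)%E) ->
  P @ \oo --> ereal_inf [set P n | n in [set n | (0 < n)%N]].
Proof.
move=> K_ge0 PmP; rewrite -cvg_shiftS /=.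
apply: limn_esup_le_cvg; last by move=> n; apply: ereal_inf_lbound; exists n.+1.
apply: le_ereal_inf_tmp => _ [n /= n_gt0 <-].
apply/lee_addgt0Pr => e e_gt0.
pose k := Num.truncn (K * n%:R / e).
have Kn_le_e : K * n%:R / k.+1%:R <= e.
  have := truncnS_gt (K * n%:R / e); rewrite ltr_pdivrMr // => k_gt.
  by rewrite ler_pdivrMr ?ltr0Sn // [e * _]mulrC; exact: ltW.
apply: ge_ereal_inf; exists (ereal_sup ((fun m => P m.+1) @` [set m | (k <= m)%N])).
  by exists [set m | (k <= m)%N] => //; exists k.
apply: ge_ereal_sup => _ [m /= km <-].
apply: le_trans (PmP n m.+1 n_gt0 isT) _; rewrite leeD2l // lee_fin.
apply: le_trans Kn_le_e; apply: ler_pM => //; first exact: mulr_ge0.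
by rewrite lef_pV2 ?posrE ?ltr0Sn // ler_nat.
Qed.

Lemma cvg_ereal_sup_of_sub_div_le (R : realType) (P : nat -> \bar R) (K : R) :
  0 <= K ->
  (forall n m, (0 < n)%N -> (0 < m)%N -> (P n - (K * n%:R / m%:R)%:E <= P m)%E) ->
  P @ \oo --> ereal_sup [set P n | n in [set n | (0 < n)%N]].
Proof.
move=> K_ge0 PnP.
have /cvgeN : (fun n => - P n)%E @ \oo -->
    ereal_inf [set (- P n)%E | n in [set n | (0 < n)%N]].
  apply: cvg_ereal_inf_of_le_add_div K_ge0 _ => n m n_gt0 m_gt0.
  by have := PnP n m n_gt0 m_gt0; rewrite -leeN2 oppeB // fin_num_adde_defl.
have oppeK_P : (fun n => - - P n)%E = P by apply/funext => n; rewrite oppeK.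
by rewrite /ereal_inf oppeK image_comp [_ \o _]oppeK_P oppeK_P.
Qed.

Section FeketeBound.
Variables (R : realFieldType) (a : nat -> R) (L : R).
Hypotheses (L_ge0 : 0 <= L) (a_bound : forall j, (0 < j)%N -> `|a j| <= j%:R * L).

Lemma subadditive_avg_le :
  (forall j k, (0 < j)%N -> (0 < k)%N -> a (j + k)%N <= a j + a k) ->
  forall n m, (0 < n)%N -> (0 < m)%N ->
  a m / m%:R <= a n / n%:R + 2 * L * n%:R / m%:R.
Proof.
move=> a_sub n m n_gt0 m_gt0.
have n_pos : 0 < n%:R :> R by rewrite ltr0n.
have m_pos : 0 < m%:R :> R by rewrite ltr0n.
set c := a n / n%:R.
have an : a n = n%:R * c by rewrite /c mulrC divfK ?gt_eqF.
have /ler_normlP [c_lo _] : `|c| <= L.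
  by rewrite -(ler_pM2l n_pos) -normr_nat -normrM -an normr_nat a_bound.
suff am_le : a m <= m%:R * c + 2 * n%:R * L.
  by rewrite ler_pdivrMr // mulrDl divfK ?gt_eqF // mulrC; lra.
elim/ltn_ind: m m_gt0 {m_pos} => m IH m_gt0.
have /ler_normlP [_ am_le] := a_bound m_gt0.
have [m_le_n | n_lt_m] := leqP m n.
  have : 0 <= m%:R * (c + L) by apply: mulr_ge0 => //; lra.
  have : 0 <= (n%:R - m%:R) * L by rewrite mulr_ge0 // subr_ge0 ler_nat.
  rewrite mulrDr mulrBl; lra.
have mn_gt0 : (0 < m - n)%N by rewrite subn_gt0.
have := a_sub n (m - n)%N n_gt0 mn_gt0; rewrite subnKC ?(ltnW n_lt_m) // => am_split.
have := IH (m - n)%N; rewrite ltn_subrL n_gt0 m_gt0 => /(_ isT mn_gt0).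
rewrite natrB ?(ltnW n_lt_m) // mulrBl; lra.
Qed.

End FeketeBound.

Lemma superadditive_avg_ge (R : realFieldType) (a : nat -> R) (L : R) :
  0 <= L -> (forall j, (0 < j)%N -> `|a j| <= j%:R * L) ->
  (forall j k, (0 < j)%N -> (0 < k)%N -> a j + a k <= a (j + k)%N) ->
  forall n m, (0 < n)%N -> (0 < m)%N ->
  a n / n%:R - 2 * L * n%:R / m%:R <= a m / m%:R.
Proof.
move=> L_ge0 a_bound a_super n m n_gt0 m_gt0.
suff : - a m / m%:R <= - a n / n%:R + 2 * L * n%:R / m%:R by rewrite !mulNr; lra.
apply: (@subadditive_avg_le R (fun j => - a j) L) => //.
- by move=> j j_gt0; rewrite normrN a_bound.
- by move=> j k j_gt0 k_gt0; rewrite -opprD lerN2 a_super.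
Qed.

Section InvariantIntegral.
Context d (T : measurableType d) (R : realType) (mu : {measure set T -> \bar R}).
Variable F : T -> T.
Hypotheses (mF : measurable_fun [set: T] F)
  (F_inv : forall A, measurable A -> mu (F @^-1` A) = mu A).

Lemma integral_pushforward_invariant (g : T -> \bar R) :
  (\int[pushforward mu F]_x g x = \int[mu]_x g x)%E.
Proof. by apply: eq_measure_integral => A mA _; exact: F_inv. Qed.

Variables (g : T -> \bar R) (mg : measurable_fun [set: T] g).

Lemma integrable_invariant_comp :
  mu.-integrable [set: T] g -> mu.-integrable [set: T] (g \o F).
Proof.
move=> /integrableP [_ g_fin]; apply/integrableP; split.
  exact: measurableT_comp mg mF.
have := ge0_integral_pushforward mF mu measurableT
  (measurableT_comp (@abse_measurable R setT) mg) (fun y _ => abse_ge0 (g y)).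
by rewrite integral_pushforward_invariant preimage_setT => <-.
Qed.

Lemma integral_invariant_comp :
  mu.-integrable [set: T] g -> (\int[mu]_x g (F x) = \int[mu]_x g x)%E.
Proof.
move=> ig; rewrite -[RHS]integral_pushforward_invariant (integral_pushforward mF mg).
- by rewrite preimage_setT.
- by rewrite preimage_setT; exact: integrable_invariant_comp.
- exact: measurableT.
Qed.

End InvariantIntegral.

Lemma ae_bounded_integral_abs_le d (T : measurableType d) (R : realType)
  (mu : probability T R) (g : T -> R) (c : R) : 0 <= c ->
  measurable_fun [set: T] g -> {ae mu, forall x, `|g x| <= c} ->
  (\int[mu]_x `|(g x)%:E| <= c%:E)%E.
Proof.
move=> c_ge0 mg g_le.
apply: le_trans (_ : \int[mu]_x (cst c%:E) x <= _)%E.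
  apply: ae_ge0_le_integral => //.
  - by apply: measurableT_comp => //; exact/measurable_EFinP.
  - by apply: filterS g_le => x g_le_c _; rewrite lee_fin.
by rewrite integral_cst // -[X in (_ * X)%E]/(mu [set: T]) probability_setT mule1.
Qed.

Section BorelContinuous.
Variables (R : realType) (M : pseudoPMetricType R).

Lemma open_measurable_Borel (A : set M) : open A -> measurable (A : set (Borel M)).
Proof. exact: sub_sigma_algebra. Qed.

Lemma continuous_measurable_fun_Borel (g : M -> R) : continuous g ->
  measurable_fun [set: Borel M] (g : Borel M -> R).
Proof.
move=> cg; apply: (measurability _ (measurable_realfun.RGenOInfty.measurableE R)).
move=> _ [_ [x ->] <-]; rewrite setTI; apply: open_measurable_Borel.
move/continuousP : cg; apply.
rewrite (_ : `]x, +oo[%classic = [set y | x < y]); first exact: open_gt.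
by apply/seteqP; split => y /=; rewrite in_itv /= andbT.
Qed.

Lemma continuous_measurable_Borel (g : M -> M) : continuous g ->
  measurable_fun [set: Borel M] (g : Borel M -> Borel M).
Proof.
move=> cg; apply: (@measurability _ _ (Borel M) (Borel M) _ _ (@open M)) => //.
move=> _ [A oA <-]; rewrite setTI; apply: open_measurable_Borel.
by move/continuousP : cg; apply.
Qed.

Lemma iter_measurable_Borel (g : M -> M) n : continuous g ->
  measurable_fun [set: Borel M] (iter n g : Borel M -> Borel M).
Proof.
move=> cg; elim: n => [|n IH] /=; first exact: measurable_id.
apply: (@measurableT_comp _ _ _ _ _ _ (g : Borel M -> Borel M)) => //.
exact: continuous_measurable_Borel.
Qed.

Lemma is_invariant_iter (nu : probability (Borel M) R) (g : M -> M) n :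
  continuous g -> is_invariant g nu -> is_invariant (iter n g) nu.
Proof.
move=> cg g_inv; elim: n => [//|n IH] A mA.
rewrite (_ : iter n.+1 g @^-1` A = iter n g @^-1` (g @^-1` A)) // IH ?g_inv //.
by rewrite -[_ @^-1` _]setTI; exact: continuous_measurable_Borel.
Qed.

End BorelContinuous.

Section PotentialIntegrals.
Variables (R : realType) (M : pseudoPMetricType R) (f : M -> M) (phi : nat -> M -> R).
Variable L : R.
Hypotheses (cf : continuous f) (cphi : forall n, continuous (phi n)) (L_ge0 : 0 <= L).
Variable nu : probability (Borel M) R.
Hypotheses (nu_inv : is_invariant f nu)
  (phi_bound : forall n, (0 < n)%N ->
     {ae nu, forall x : Borel M, `|phi n x| / n%:R <= L}).

Definition phi_integral n := fine (\int[nu]_x (phi n x)%:E)%E.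

Let mphi n : measurable_fun [set: Borel M] (fun x : Borel M => (phi n x)%:E).
Proof. by apply/measurable_EFinP; exact: continuous_measurable_fun_Borel. Qed.

Let integral_abs_phi_le n : (0 < n)%N ->
  (\int[nu]_x `|(phi n x)%:E| <= (n%:R * L)%:E)%E.
Proof.
move=> n_gt0; apply: ae_bounded_integral_abs_le.
- exact: mulr_ge0.
- exact: continuous_measurable_fun_Borel.
- by apply: filterS (phi_bound n_gt0) => x; rewrite ler_pdivrMr ?ltr0n // mulrC.
Qed.

Lemma integrable_phi n : (0 < n)%N -> nu.-integrable [set: Borel M] (fun x => (phi n x)%:E).
Proof.
move=> n_gt0; apply/integrableP; split => //.
exact: le_lt_trans (integral_abs_phi_le n_gt0) (ltry _).
Qed.

Lemma phi_integralE n : (0 < n)%N ->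
  (\int[nu]_x (phi n x)%:E)%E = (phi_integral n)%:E.
Proof. by move=> n_gt0; rewrite fineK // (integrable_fin_num _ (integrable_phi n_gt0)). Qed.

Lemma norm_phi_integral_le n : (0 < n)%N -> `|phi_integral n| <= n%:R * L.
Proof.
move=> n_gt0; rewrite -lee_fin -abse_EFin -phi_integralE //.
exact: le_trans (le_abse_integral _ _ (mphi n)) (integral_abs_phi_le n_gt0).
Qed.

Lemma integral_phi_avg n : (0 < n)%N ->
  (\int[nu]_x (phi n x / n%:R)%:E)%E = (phi_integral n / n%:R)%:E.
Proof.
move=> n_gt0; under eq_integral do rewrite mulrC EFinM.
by rewrite integralZl ?integrable_phi // phi_integralE // -EFinM mulrC.
Qed.

Lemma integrable_phi_iter n m : (0 < m)%N ->
  nu.-integrable [set: Borel M] (fun x => (phi m (iter n f x))%:E).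
Proof.
move=> m_gt0; apply: (integrable_invariant_comp _ _ (mphi m)).
- exact: iter_measurable_Borel.
- exact: is_invariant_iter.
- exact: integrable_phi.
Qed.

Lemma integral_phi_iter n m : (0 < m)%N ->
  (\int[nu]_x (phi m (iter n f x))%:E)%E = (phi_integral m)%:E.
Proof.
move=> m_gt0; rewrite -phi_integralE //.
apply: (integral_invariant_comp _ _ (mphi m)).
- exact: iter_measurable_Borel.
- exact: is_invariant_iter.
- exact: integrable_phi.
Qed.

Let integral_phi_cocycle j k : (0 < j)%N -> (0 < k)%N ->
  (\int[nu]_x ((phi j x)%:E + (phi k (iter j f x))%:E) =
   (phi_integral j + phi_integral k)%:E)%E.
Proof.
move=> j_gt0 k_gt0; rewrite integralD ?integrable_phi ?integrable_phi_iter //.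
by rewrite phi_integralE // integral_phi_iter.
Qed.

Let integrable_phi_cocycle j k : (0 < j)%N -> (0 < k)%N ->
  nu.-integrable [set: Borel M] (fun x => (phi j x)%:E + (phi k (iter j f x))%:E)%E.
Proof.
by move=> j_gt0 k_gt0; apply: integrableD; rewrite ?integrable_phi ?integrable_phi_iter.
Qed.

Lemma phi_integral_subadditive : subadditive_seq f phi ->
  forall j k, (0 < j)%N -> (0 < k)%N ->
  phi_integral (j + k) <= phi_integral j + phi_integral k.
Proof.
move=> phi_sub j k j_gt0 k_gt0.
rewrite -lee_fin -phi_integralE ?addn_gt0 ?j_gt0 // -integral_phi_cocycle //.
apply: le_integral; rewrite ?integrable_phi ?integrable_phi_cocycle ?addn_gt0 ?j_gt0 //.
by move=> x _; rewrite -EFinD lee_fin phi_sub.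
Qed.

Lemma phi_integral_superadditive : superadditive_seq f phi ->
  forall j k, (0 < j)%N -> (0 < k)%N ->
  phi_integral j + phi_integral k <= phi_integral (j + k).
Proof.
move=> phi_super j k j_gt0 k_gt0.
rewrite -lee_fin -phi_integralE ?addn_gt0 ?j_gt0 // -integral_phi_cocycle //.
apply: le_integral; rewrite ?integrable_phi ?integrable_phi_cocycle ?addn_gt0 ?j_gt0 //.
by move=> x _; rewrite -EFinD lee_fin phi_super.
Qed.

End PotentialIntegrals.

Lemma pressure_le_add (R : realType) (M : pseudoPMetricType R) (f : M -> M)
  (g1 g2 : M -> R) (t : R) :
  (forall nu, Mf f nu ->
     (\int[nu]_x (g1 x)%:E <= \int[nu]_x (g2 x)%:E + t%:E)%E) ->
  (pressure f g1 <= pressure f g2 + t%:E)%E.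
Proof.
move=> g12; apply: ge_ereal_sup => _ [nu nu_inv <-].
apply: le_trans (_ : hmu f nu + \int[nu]_x (g2 x)%:E + t%:E <= _)%E.
  by rewrite -addeA leeD2l // g12.
by apply: leeD2r; apply: ereal_sup_ubound; exists nu.
Qed.

Section PressureOfAverages.
Variables (R : realType) (M : pseudoPMetricType R) (f : M -> M) (phi : nat -> M -> R).
Variable L : R.
Hypotheses (cf : continuous f) (cphi : forall n, continuous (phi n)) (L_ge0 : 0 <= L)
  (phi_bound : forall nu, Mf f nu -> forall n, (0 < n)%N ->
     {ae nu, forall x : Borel M, `|phi n x| / n%:R <= L}).

Let P n := pressure f (fun x => phi n x / n%:R).

Lemma pressure_avg_subadditive_le : subadditive_seq f phi ->
  forall n m, (0 < n)%N -> (0 < m)%N -> (P m <= P n + (2 * L * n%:R / m%:R)%:E)%E.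
Proof.
move=> phi_sub n m n_gt0 m_gt0; apply: pressure_le_add => nu nu_inv.
have nu_bound := phi_bound nu_inv.
rewrite !(integral_phi_avg cphi L_ge0 nu_bound) // -EFinD lee_fin.
apply: (subadditive_avg_le L_ge0 _ _ n_gt0 m_gt0) => [j j_gt0 | j k j_gt0 k_gt0].
- exact: (norm_phi_integral_le cphi L_ge0 nu_bound).
- exact: (phi_integral_subadditive cf cphi L_ge0 nu_inv nu_bound phi_sub).
Qed.

Lemma pressure_avg_superadditive_ge : superadditive_seq f phi ->
  forall n m, (0 < n)%N -> (0 < m)%N -> (P n - (2 * L * n%:R / m%:R)%:E <= P m)%E.
Proof.
move=> phi_super n m n_gt0 m_gt0; rewrite leeBlDr //; apply: pressure_le_add => nu nu_inv.
have nu_bound := phi_bound nu_inv.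
rewrite !(integral_phi_avg cphi L_ge0 nu_bound) // -EFinD lee_fin -lerBlDr.
apply: (superadditive_avg_ge L_ge0 _ _ n_gt0 m_gt0) => [j j_gt0 | j k j_gt0 k_gt0].
- exact: (norm_phi_integral_le cphi L_ge0 nu_bound).
- exact: (phi_integral_superadditive cf cphi L_ge0 nu_inv nu_bound phi_super).
Qed.

End PressureOfAverages.

Theorem lemma6p1 (R : realType) (M : pseudoPMetricType R) (f : M -> M)
  (phi : nat -> M -> R) (L : R) :
  hausdorff_space M -> compact [set: M] ->
  continuous f -> (forall n, continuous (phi n)) ->
  0 < L ->
  (forall nu, Mf f nu -> forall n, (0 < n)%N ->
     {ae nu, forall x : Borel M, `|phi n x| / n%:R <= L}) ->
  (subadditive_seq f phi ->
     (fun n => pressure f (fun x => phi n x / n%:R)) @ \oo -->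
       ereal_inf [set pressure f (fun x => phi n x / n%:R) | n in [set n | (0 < n)%N]])
  /\
  (superadditive_seq f phi ->
     (fun n => pressure f (fun x => phi n x / n%:R)) @ \oo -->
       ereal_sup [set pressure f (fun x => phi n x / n%:R) | n in [set n | (0 < n)%N]]).
Proof.
move=> _ _ cf cphi L_gt0 phi_bound.
have L_ge0 := ltW L_gt0.
have twoL_ge0 : 0 <= 2 * L by rewrite mulr_ge0.
split => [phi_sub | phi_super].
- apply: cvg_ereal_inf_of_le_add_div twoL_ge0 _.
  exact: pressure_avg_subadditive_le.
- apply: cvg_ereal_sup_of_sub_div_le twoL_ge0 _.
  exact: pressure_avg_superadditive_ge.
Qed.
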